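(* $\mathfrak{ss}_e=\mathfrak{ss}_l^{\{0\}}$ and $\mathfrak{ss}_e^\perp=(\mathfrak{ss}_l^{\{0\}})^\perp$.
   Context: Let $\mathfrak S_{cc}$ be the set of all sequences $\mathbf a=\langle a_i:i\in\omega\rangle$ of rational numbers with $a_i\to0$ such that $\sum_i a_i$ is conditionally convergent (converges to a real number, with the positive terms summing to $+\infty$ and the negative terms to $-\infty$). Let $[\omega]^\omega_\omega$ be the set of infinite coinfinite subsets of $\omega$; for such $X$ with increasing enumeration $\langle i_n\rangle$, $\sum_X\mathbf a$ denotes $\sum_n a_{i_n}$. For $A\subseteq\mathbb R$: $\mathfrak{ss}_l^A$ is the least cardinality of $\mathcal X\subseteq[\omega]^\omega_\omega$ such that every $\mathbf a\in\mathfrak S_{cc}$ has some $X\in\mathcal X$ for which $\sum_X\mathbf a$ converges to a limit in $A$; $(\mathfrak{ss}_l^A)^\perp$ is the least cardinality of $\mathcal A\subseteq\mathfrak S_{cc}$ such that no $X\in[\omega]^\omega_\omega$ has $\sum_X\mathbf a$ converging to a limit in $A$ for all $\mathbf a\in\mathcal A$. $\mathfrak{ss}_e$ is the least cardinality of $\mathcal X\subseteq[\omega]^\omega_\omega$ such that every $\mathbf a\in\mathfrak S_{cc}$ has some $X\in\mathcal X$ for which $\sum_X\mathbf a$ converges to the same limit as $\sum\mathbf a$; $\mathfrak{ss}_e^\perp$ is the least cardinality of $\mathcal A\subseteq\mathfrak S_{cc}$ such that no $X\in[\omega]^\omega_\omega$ has $\sum_X\mathbf a=\sum\mathbf a$ for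 all $\mathbf a\in\mathcal A$. *)

From HB Require Import structures.
From mathcomp Require Import all_boot all_order all_algebra.
From mathcomp Require Import all_classical all_reals all_analysis.
From mathcomp Require Import Rstruct Rstruct_topology.
Set Implicit Arguments. Unset Strict Implicit. Unset Printing Implicit Defensive.
Import Order.TTheory GRing.Theory Num.Theory.
Local Open Scope classical_set_scope.
Local Open Scope ring_scope.


Definition rseq (a : nat -> rat) : nat -> Rdefinitions.R := fun n => ratr (a n).

Definition Scc : set (nat -> rat) := [set a |
  (rseq a @ \oo --> (0 : Rdefinitions.R)) /\
  (exists l : Rdefinitions.R, series (rseq a) @ \oo --> l) /\
  (series (fun n => Num.max (rseq a n) 0) @ \oo --> +oo) /\
  (series (fun n => Num.min (rseq a n) 0) @ \oo --> -oo)].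

Definition infcoinf : set (set nat) :=
  [set X | ~ finite_set X /\ ~ finite_set (~` X)].

Definition subsum_to (X : set nat) (a : nat -> rat) (l : Rdefinitions.R) : Prop :=
  exists e : nat -> nat, (forall n, (e n < e n.+1)%N) /\ range e = X /\
    series (fun n => rseq a (e n)) @ \oo --> l.

Definition ssl_family (A : set Rdefinitions.R) (XX : set (set nat)) : Prop :=
  XX `<=` infcoinf /\
  forall a, Scc a -> exists2 X, XX X & exists2 l, A l & subsum_to X a l.

Definition ssl_perp_family (A : set Rdefinitions.R) (AA : set (nat -> rat)) : Prop :=
  AA `<=` Scc /\
  ~ exists2 X, infcoinf X & forall a, AA a -> exists2 l, A l & subsum_to X a l.

Definition sse_family (XX : set (set nat)) : Prop :=
  XX `<=` infcoinf /\
  forall a, Scc a -> exists2 X, XX X &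
    exists l : Rdefinitions.R, series (rseq a) @ \oo --> l /\ subsum_to X a l.

Definition sse_perp_family (AA : set (nat -> rat)) : Prop :=
  AA `<=` Scc /\
  ~ exists2 X, infcoinf X & forall a, AA a ->
    exists l : Rdefinitions.R, series (rseq a) @ \oo --> l /\ subsum_to X a l.

(* "the least cardinality of a family satisfying P equals the least cardinality
   of a family satisfying Q" (both minima taken over the cardinals of witness
   families; with AC this is equivalent to the following, and it also covers the
   case where one side has no witness at all). *)
Definition min_card_eq {T U : Type} (P : set T -> Prop) (Q : set U -> Prop) : Prop :=
  (forall A, P A -> exists B, Q B /\ (B #<= A)%card) /\
  (forall B, Q B -> exists A, P A /\ (A #<= B)%card).

From mathcomp Require Import all_boot all_order all_algebra.
From mathcomp Require Import all_classical all_reals all_analysis.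
From mathcomp Require Import Rstruct Rstruct_topology.

(* If [X] is infinite and coinfinite, [sum_X a] and [sum_(~X) a] are
   complementary subseries of [sum a]: every partial sum of [a] splits into a
   partial sum over [X] and one over [~X], and both indices tend to infinity
   along the enumeration of either set.  So when [sum a = L], [sum_X a = l]
   iff [sum_(~X) a = L - l]; in particular [sum_X a = sum a] iff
   [sum_(~X) a = 0].  Complementation maps witness families for [ss_e] to
   witness families for [ss_l^{0}] and back without increasing their size,
   and a family of series defeats every [X] in the first sense iff it defeats
   every [~X] in the second. *)

Set Implicit Arguments. Unset Strict Implicit.
Import Order.TTheory GRing.Theory Num.Theory.
Local Open Scope classical_set_scope.
Local Open Scope ring_scope.

Section increasing_seq_nat.
Variable e : nat -> nat.
Hypothesis e_incr : increasing_seq e.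

Lemma increasing_seq_leq : {mono e : m n / (m <= n)%N}.
Proof. exact: e_incr. Qed.

Lemma increasing_seq_ltn : {mono e : m n / (m < n)%N}.
Proof. exact: leW_mono. Qed.

Lemma increasing_seq_geq n : (n <= e n)%N.
Proof. by elim: n => // n IH; rewrite (leq_ltn_trans IH) ?increasing_seq_ltn. Qed.

Lemma increasing_seq_count N : exists i, forall k, (e k < N)%N = (k < i)%N.
Proof.
have [|i Nei imin] := ex_minnP (_ : exists k, N <= e k)%N.
  by exists N; apply: increasing_seq_geq.
exists i => k; apply/idP/idP => [ekN|ki].
  rewrite ltnNge; apply: contraL ekN => ik.
  by rewrite -leqNgt (leq_trans Nei) ?increasing_seq_leq.
by rewrite ltnNge; apply: contraL ki => /imin; rewrite -leqNgt.
Qed.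

Lemma filter_iota_range N i : (forall k, (e k < N)%N = (k < i)%N) ->
  [seq n <- iota 0 N | n \in range e] = map e (iota 0 i).
Proof.
move=> eN; apply: (irr_sorted_eq (leT := ltn) ltn_trans ltnn).
- apply: sorted_filter; [exact: ltn_trans | exact: iota_ltn_sorted].
- by rewrite (mono_sorted increasing_seq_ltn) iota_ltn_sorted.
move=> n; rewrite mem_filter mem_iota /=.
apply/andP/mapP => [[/set_mem[k _ <-] ekN] | [k + ->]].
  by exists k; rewrite // mem_iota /= -eN.
by rewrite mem_iota /= -eN => ekN; split=> //; apply/mem_set; exists k.
Qed.

End increasing_seq_nat.

Lemma increasing_seq_natP (e : nat -> nat) :
  (forall n, (e n < e n.+1)%N) <-> increasing_seq e.
Proof.
split=> [e_incr | e_incr n]; last by rewrite increasing_seq_ltn.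
exact: leq_mono (homo_ltn ltn_trans e_incr).
Qed.

Lemma infinite_set_nat_enum (X : set nat) : infinite_set X ->
  exists e, increasing_seq e /\ range e = X.
Proof.
move=> Xinf.
have Xunbounded N : exists y, (N <= y)%N && `[< X y >].
  apply: contrapT => /forallNP Xbounded; apply: Xinf.
  apply: sub_finite_set (finite_II N) => y Xy /=; rewrite ltnNge.
  by apply: contra_notN (Xbounded y) => Ny; rewrite Ny; apply/asboolP.
have least_above N : exists y,
    [/\ X y, (N <= y)%N & forall z, X z -> (N <= z)%N -> (y <= z)%N].
  have [y /andP[Ny /asboolP Xy] ymin] := ex_minnP (Xunbounded N).
  by exists y; split=> // z Xz Nz; apply: ymin; rewrite Nz; apply/asboolP.
have [next next_spec] := choice least_above.
pose e n := iter n (fun m => next m.+1) (next 0).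
have e_incr : increasing_seq e.
  by apply/increasing_seq_natP => n; have [_ + _] := next_spec (e n).+1.
exists e; split=> //; apply/seteqP; split => [_ [[|n] _ <-] | x Xx].
- by have [] := next_spec 0.
- by have [] := next_spec (e n).+1.
have [|n xen nmin] := ex_minnP (_ : exists n, x <= e n)%N.
  by exists x; apply: increasing_seq_geq.
exists n => //; apply/eqP; rewrite eqn_leq xen andbT.
case: n xen nmin => [|n] _ nmin; first by have [_ _] := next_spec 0; apply.
have [_ _] := next_spec (e n).+1; apply=> //.
by rewrite ltnNge; apply: contraT => /negbNE /nmin; rewrite ltnn.
Qed.

Lemma series_iota (V : zmodType) (u : V^nat) N :
  series u N = \sum_(n <- iota 0 N) u n.
Proof. by rewrite -[LHS]/(\sum_(0 <= n < N) u n) /index_iota subn0. Qed.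

Lemma series_split_range (V : zmodType) (u : V^nat) (e f : nat -> nat) N i j :
  increasing_seq e -> increasing_seq f -> range f = ~` range e ->
  (forall k, (e k < N)%N = (k < i)%N) -> (forall k, (f k < N)%N = (k < j)%N) ->
  series u N = series (u \o e) i + series (u \o f) j.
Proof.
move=> e_incr f_incr fe eN fN.
have sum_range (g : nat -> nat) m :
    increasing_seq g -> (forall k, (g k < N)%N = (k < m)%N) ->
    \sum_(n <- iota 0 N | n \in range g) u n = series (u \o g) m.
  move=> g_incr gN.
  by rewrite -big_filter (filter_iota_range g_incr gN) big_map series_iota.
rewrite series_iota (bigID (fun n => n \in range e)).
rewrite -(sum_range e i) // -(sum_range f j) //.
by congr (_ + _); apply: eq_bigl => n; rewrite fe in_setC.
Qed.

Lemma cvg_series_range_compl (K : numFieldType)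
    (V : pseudoMetricNormedZmodType K) (u : V^nat) (e f : nat -> nat) (L l : V) :
  increasing_seq e -> increasing_seq f -> range f = ~` range e ->
  series u @ \oo --> L -> series (u \o e) @ \oo --> l ->
  series (u \o f) @ \oo --> L - l.
Proof.
move=> e_incr f_incr fe uL uel.
have [c ec] := choice (increasing_seq_count e_incr).
have -> : series (u \o f) = (fun m => series u (f m) - series (u \o e) (c (f m))).
  apply/funext => m.
  have fm k : (f k < f m)%N = (k < m)%N by apply: increasing_seq_ltn.
  rewrite (series_split_range u e_incr f_incr fe (ec (f m)) fm).
  by rewrite addrAC subrr add0r.
have f_oo : f @ \oo --> \oo.
  apply/cvgnyPge => A; near=> n; apply: leq_trans (increasing_seq_geq f_incr n).
  by near: n; apply: nbhs_infty_ge.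
have cf_oo : (c \o f) @ \oo --> \oo.
  apply/cvgnyPge => A; near=> n; apply: ltnW; rewrite -ec.
  by near: n; apply: (cvgnyPgt _).1 f_oo (e A).
by apply: cvgB; [exact: cvg_comp f_oo uL | exact: cvg_comp cf_oo uel].
Unshelve. all: by end_near.
Qed.

Lemma infcoinfC X : infcoinf X -> infcoinf (~` X).
Proof. by case=> Xinf CXinf; split; rewrite ?setCK. Qed.

Lemma subsum_toC X a (L l : Rdefinitions.R) :
  infcoinf X -> series (rseq a) @ \oo --> L ->
  subsum_to X a l -> subsum_to (~` X) a (L - l).
Proof.
move=> [_ /infinite_set_nat_enum[f [f_incr fX]]] aL.
move=> [e [/increasing_seq_natP e_incr [eX ael]]].
exists f; split; first exact/increasing_seq_natP.
split=> //; apply: (@cvg_series_range_compl _ Rdefinitions.R^o _ e) aL ael => //.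
by rewrite eX.
Qed.

Lemma sse_family_setC XX : sse_family XX -> ssl_family [set 0] (setC @` XX).
Proof.
move=> [XXsub XXsse]; split=> [_ [X /XXsub XXi <-] | a /XXsse[X XXX [l [al aXl]]]].
  exact: infcoinfC.
exists (~` X); first by exists X.
by exists 0 => //; rewrite -(subrr l); apply: subsum_toC al aXl; apply: XXsub.
Qed.

Lemma ssl_family0_setC XX : ssl_family [set 0] XX -> sse_family (setC @` XX).
Proof.
move=> [XXsub XXssl]; split=> [_ [X /XXsub XXi <-] | a Scc_a].
  exact: infcoinfC.
have [X XXX [_ -> aX0]] := XXssl a Scc_a; have [_ [[L aL] _]] := Scc_a.
exists (~` X); first by exists X.
by exists L; split=> //; rewrite -(subr0 L); apply: subsum_toC aL aX0; apply: XXsub.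
Qed.

Lemma sse_perp_familyE AA : sse_perp_family AA <-> ssl_perp_family [set 0] AA.
Proof.
split=> -[AAsub noX]; split=> // -[X Xi Xsums]; apply: noX.
  exists (~` X); first exact: infcoinfC.
  move=> a AAa; have [_ [[L aL] _]] := AAsub a AAa; have [_ -> aX0] := Xsums a AAa.
  by exists L; split=> //; rewrite -(subr0 L); apply: subsum_toC aL aX0.
exists (~` X); first exact: infcoinfC.
move=> a AAa; have [l [al aXl]] := Xsums a AAa.
by exists 0 => //; rewrite -(subrr l); apply: subsum_toC al aXl.
Qed.

Theorem mainTheorem8 :
  min_card_eq sse_family (ssl_family [set (0 : Rdefinitions.R)%R]) /\
  min_card_eq sse_perp_family (ssl_perp_family [set (0 : Rdefinitions.R)%R]).
Proof.
split; split.
- move=> XX /sse_family_setC XXC; exists (setC @` XX); split=> //.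
  exact: card_image_le.
- move=> XX /ssl_family0_setC XXC; exists (setC @` XX); split=> //.
  exact: card_image_le.
- by move=> AA /sse_perp_familyE AAperp; exists AA; split=> //; apply: card_lexx.
- by move=> AA /sse_perp_familyE AAperp; exists AA; split=> //; apply: card_lexx.
Qed.
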